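(* If $G$ is a graph with $\delta(G)\ge 2$, then $$\mathrm{TC}_2(G)\le \max\Big\{\Delta(G),\ \Big\lfloor\tfrac{\delta(G)}{2}\Big\rfloor(\Delta(G)-4)+\delta(G)\Big\}.$$ Moreover, this bound is sharp, i.e., there exist graphs attaining equality.
   Context: All graphs are finite, simple and connected. $N(v)$ denotes the open neighborhood of $v$; $\delta(G)$ and $\Delta(G)$ are minimum and maximum degree. A set $S\subseteq V(G)$ is a total $2$-dominating set if $|N(v)\cap S|\ge 2$ for every $v\in V(G)$. Two disjoint sets $U,W\subseteq V(G)$ form a total $2$-coalition if neither is a total $2$-dominating set but $U\cup W$ is. A total $2$-coalition partition of $G$ is a partition $\Omega$ of $V(G)$ in which every set forms a total $2$-coalition with some other set of $\Omega$; $\mathrm{TC}_2(G)$ is the maximum cardinality of such a partition. *)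

From mathcomp Require Import all_boot all_order all_algebra.
Set Implicit Arguments. Unset Strict Implicit. Unset Printing Implicit Defensive.
Import Order.TTheory GRing.Theory Num.Theory.

Definition simple_connected_graph (T : finType) (e : rel T) : Prop :=
  symmetric e /\ irreflexive e /\ (forall x y : T, connect e x y).

Definition nbhd (T : finType) (e : rel T) (v : T) : {set T} := [set u | e v u].
Definition deg (T : finType) (e : rel T) (v : T) : nat := #|nbhd e v|.

(* maximum degree; minimum degree (the seed #|T| exceeds every degree of a
   loopless graph, so for a nonempty graph this is the true minimum) *)
Definition maxdeg (T : finType) (e : rel T) : nat := \max_(v : T) deg e v.
Definition mindeg (T : finType) (e : rel T) : nat :=
  \big[minn/#|T|]_(v : T) deg e v.

Definition total2dom (T : finType) (e : rel T) (S : {set T}) : bool :=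
  [forall v : T, 2 <= #|nbhd e v :&: S|].

Definition total2coal (T : finType) (e : rel T) (U W : {set T}) : bool :=
  [&& [disjoint U & W], ~~ total2dom e U, ~~ total2dom e W &
      total2dom e (U :|: W)].

Definition total2coal_partition (T : finType) (e : rel T)
    (P : {set {set T}}) : bool :=
  partition P [set: T] &&
  [forall U in P, exists W in P, (W != U) && total2coal e U W].

(* TC_2(G): maximum cardinality of a total 2-coalition partition
   (0 if none exists) *)
Definition TC2 (T : finType) (e : rel T) : nat :=
  \max_(P : {set {set T}} | total2coal_partition e P) #|P|.

Local Open Scope ring_scope.
Definition tc2_bound (T : finType) (e : rel T) : int :=
  Order.max (maxdeg e)%:Z
    (((mindeg e)./2)%:Z * ((maxdeg e)%:Z - 4) + (mindeg e)%:Z)%R.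

(* Let D be the maximum degree, fix a vertex v of minimum degree d and give
   every block S of a total 2-coalition partition a partner f S, so that every
   vertex has two neighbours in S :|: f S while some vertex has at most one
   neighbour in S.  Call a block heavy if it contains two neighbours of v: if
   a blocks meet N(v) and b of them are heavy then a + b <= d, so b <= d/2, and
   a block missing N(v) has a heavy partner.  If each heavy block is the
   partner of at most D - 3 blocks missing N(v), there are at most
   a + b (D - 3) <= d/2 (D - 4) + d blocks.  Otherwise a heavy block Y is the
   partner of at least D - 2 such blocks; the vertex w with at most one
   neighbour in Y then meets almost all of them, and repeating the count at w
   (blocks missing N(w) have partners heavy for w) leaves room for at most D,
   or D + b - 2, blocks. *)

From mathcomp Require Import all_boot all_order all_algebra zify.
Import Order.TTheory GRing.Theory Num.Theory.

Set Implicit Arguments.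
Unset Strict Implicit.
Unset Printing Implicit Defensive.

(* Truncation in D - 4 is harmless: for D < 4 both this and [tc2_bound] are D. *)
Definition tc2_boundn (D d : nat) : nat := maxn D (d./2 * (D - 4) + d).

Lemma tc2_boundn_sparse D d a b r :
  a + b <= d -> d <= D -> b <= a -> r <= b * (D - 3) -> a + r <= tc2_boundn D d.
Proof.
move=> abd dD ba rb; have bh : b * (D - 4) <= d./2 * (D - 4) by apply: leq_mul; lia.
by rewrite leq_max; apply/orP; case: (leqP D 4) => D4; [left|right]; nia.
Qed.

Lemma tc2_boundn_dense D d b t :
  2 * b <= d -> d <= D -> t + 2 <= D + b -> t <= tc2_boundn D d.
Proof.
move=> bd dD tb; rewrite leq_max; apply/orP; case: (leqP b 2) => b2; [left; lia|right].
have : 3 * (D - 4) <= d./2 * (D - 4) by apply: leq_mul; lia.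
lia.
Qed.

Lemma card_setIn_sum (I : finType) (A : {set I}) (p : pred I) :
  #|[set x in A | p x]| = \sum_(x in A) p x.
Proof.
rewrite -sum1_card (eq_bigl (fun x => (x \in A) && p x)) => [|x]; last by rewrite inE.
by rewrite big_mkcondr; apply: eq_bigr => x _; case: (p x).
Qed.

(* Blocks S \in P with partner map f; [n u S] plays |N(u) :&: S|, D the
   maximum degree and (below) d the degree of v. *)
Section PartnerCounting.

Variables (V : Type) (I : finType) (P : {set I}) (f : I -> I) (n : V -> I -> nat).
Variable D : nat.
Hypothesis sum_le : forall u, \sum_(S in P) n u S <= D.
Hypothesis partner_in : {in P, forall S, f S \in P}.
Hypothesis partner_cover : forall u, {in P, forall S, 2 <= n u S + n u (f S)}.
Hypothesis undominated : {in P, forall S, exists u, n u S <= 1}.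

Definition miss w := [set S in P | n w S == 0].
Definition hit w := [set S in P | 0 < n w S].
Definition heavy w := [set S in P | 1 < n w S].

Lemma heavy_sub_hit w : heavy w \subset hit w.
Proof. by apply/subsetP => S; rewrite !inE => /andP[-> /ltnW]. Qed.

Lemma card_hit_miss w : #|P| = #|hit w| + #|miss w|.
Proof.
rewrite !card_setIn_sum -big_split -sum1_card /=.
by apply: eq_bigr => S _; case: (n w S).
Qed.

Lemma card_heavy_le_hit w : #|heavy w| <= #|hit w|.
Proof. exact/subset_leq_card/heavy_sub_hit. Qed.

Lemma card_hit_heavy w : #|hit w| + #|heavy w| <= \sum_(S in P) n w S.
Proof.
rewrite !card_setIn_sum -big_split /=.
by apply: leq_sum => S _; case: (n w S) => [|[]].
Qed.

Lemma card_heavy_miss w : #|P| + #|heavy w| <= D + #|miss w|.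
Proof.
by have := card_hit_heavy w; have := sum_le w; rewrite (card_hit_miss w); lia.
Qed.

Lemma partner_heavy w : {in miss w, forall S, f S \in heavy w}.
Proof.
move=> S; rewrite !inE => /andP[SP /eqP nS].
by have := partner_cover w SP; rewrite nS partner_in.
Qed.

Lemma card_le_heavy0 w : heavy w = set0 -> #|P| <= D.
Proof.
move=> h0; have m0 : miss w = set0.
  by apply/eqP; rewrite -subset0; apply/subsetP => S /partner_heavy; rewrite h0 inE.
by have := card_heavy_miss w; rewrite h0 m0 !cards0; lia.
Qed.

Lemma miss_sub_heavy w x : heavy w \subset miss x -> miss w \subset heavy x.
Proof.
move=> hm; apply/subsetP => S Sw; have := subsetP hm _ (partner_heavy Sw).
move: Sw; rewrite !inE => /andP[SP _] /andP[_ /eqP nfS].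
by have := partner_cover x SP; rewrite nfS addn0 SP.
Qed.

Variables (v : V) (d : nat).
Hypothesis sum_v : \sum_(S in P) n v S <= d.
Hypothesis d_le_D : d <= D.

Definition fiber Y := [set X in miss v | f X == Y].

Lemma card_miss_fibers k :
  {in heavy v, forall Y, #|fiber Y| <= k} -> #|miss v| <= #|heavy v| * k.
Proof.
move=> fk; rewrite -sum_nat_const -sum1_card.
rewrite (partition_big f (mem (heavy v))) => [|X]; last exact: partner_heavy.
apply: leq_sum => Y Yh; apply: leq_trans (fk Y Yh); rewrite -sum1_card.
by apply: eq_leq; apply: eq_bigl => X; rewrite !inE.
Qed.

Lemma card_hit_heavy_le_d : #|hit v| + #|heavy v| <= d.
Proof. exact: leq_trans (card_hit_heavy v) sum_v. Qed.

Lemma card_le_sparse :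
  {in heavy v, forall Y, #|fiber Y| + 3 <= D} -> #|P| <= tc2_boundn D d.
Proof.
move=> sparse; rewrite (card_hit_miss v).
apply: tc2_boundn_sparse card_hit_heavy_le_d d_le_D (card_heavy_le_hit v) _.
by apply: card_miss_fibers => Y /sparse; lia.
Qed.

Lemma card_le_small_fiber Y :
  Y \in heavy v -> #|fiber Y| <= 1 -> D <= 3 -> #|P| <= D.
Proof.
move=> Yh small D3; have ab_le_d := card_hit_heavy_le_d.
have b_le_a := card_heavy_le_hit v.
have /card_le1_eqP heavy_Y : #|heavy v| <= 1 by lia.
have fibers1 : {in heavy v, forall Z, #|fiber Z| <= 1}.
  by move=> Z Zh; rewrite -(heavy_Y Z Y Zh Yh).
by have := card_miss_fibers fibers1; rewrite (card_hit_miss v); lia.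
Qed.

Lemma fiber_sub Y : fiber Y \subset miss v.
Proof. by apply/subsetP => X; rewrite inE => /andP[]. Qed.

Lemma card_dense_hit Y w : Y \in heavy v -> D <= #|fiber Y| + 2 ->
  n w Y = 1 -> heavy w != set0 -> #|P| + 2 <= D + #|heavy v|.
Proof.
move=> Yh dense nwY; rewrite -card_gt0 => hw.
have YP : Y \in P by move: Yh; rewrite inE => /andP[].
have Y_fiber : Y \notin fiber Y.
  apply/negP; rewrite !inE => /andP[/andP[_ /eqP nvY] _].
  by move: Yh; rewrite inE nvY andbF.
have fiber_hit : Y |: fiber Y \subset hit w.
  apply/subsetP => X; rewrite !inE => /orP[/eqP->|/andP[/andP[XP _] /eqP fX]].
    by rewrite YP nwY.
  by have := partner_cover w XP; rewrite fX nwY XP /=; lia.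
have hit_eq : hit w = Y |: fiber Y.
  apply/esym/eqP; rewrite eqEcard fiber_hit cardsU1 Y_fiber /=.
  by have := card_hit_heavy w; have := sum_le w; lia.
have heavy_fiber : heavy w \subset fiber Y.
  apply/subsetP => Z Zh; have := subsetP (heavy_sub_hit w) Z Zh.
  by rewrite hit_eq => /setU1P[ZY|//]; move: Zh; rewrite ZY inE nwY andbF.
have miss_heavy : miss w \subset heavy v :\ Y.
  rewrite subsetD1 (miss_sub_heavy (subset_trans heavy_fiber (fiber_sub Y))).
  by rewrite inE nwY andbF.
have := card_heavy_miss w; have := subset_leq_card miss_heavy.
by rewrite (cardsD1 Y (heavy v)) Yh; lia.
Qed.

Lemma card_dense_miss Y w : D <= #|fiber Y| + 2 -> 1 < #|fiber Y| ->
  n w Y = 0 -> #|P| + 2 <= D + #|heavy v|.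
Proof.
move=> dense big nwY.
have fiber_heavy : fiber Y \subset heavy w.
  apply/subsetP => X; rewrite !inE => /andP[/andP[XP _] /eqP fX].
  by have := partner_cover w XP; rewrite fX nwY addn0 XP.
have heavy_eq : heavy w = fiber Y.
  apply/esym/eqP; rewrite eqEcard fiber_heavy /=.
  have := card_hit_heavy w; have := sum_le w.
  by have := card_heavy_le_hit w; have := subset_leq_card fiber_heavy; lia.
have miss_heavy : miss w \subset heavy v.
  by apply: miss_sub_heavy; rewrite heavy_eq fiber_sub.
by have := card_heavy_miss w; have := subset_leq_card miss_heavy; rewrite heavy_eq; lia.
Qed.

Lemma card_le_dense Y :
  Y \in heavy v -> D <= #|fiber Y| + 2 -> #|P| <= tc2_boundn D d.
Proof.
move=> Yh dense; have PD : #|P| <= D -> #|P| <= tc2_boundn D d.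
  by move=> PD; apply: leq_trans PD (leq_maxl _ _).
have [small|big] := leqP #|fiber Y| 1.
  by apply/PD/(card_le_small_fiber Yh small); lia.
have YP : Y \in P by move: Yh; rewrite inE => /andP[].
have [w nwY] := undominated YP.
have [/card_le_heavy0 /PD //|hw] := eqVneq (heavy w) set0.
apply: (@tc2_boundn_dense _ _ #|heavy v| _ _ d_le_D).
  by have := card_hit_heavy_le_d; have := card_heavy_le_hit v; lia.
move: nwY; rewrite leq_eqVlt ltnS leqn0 => /orP[] /eqP nwY.
  exact: card_dense_hit Yh dense nwY hw.
exact: card_dense_miss dense big nwY.
Qed.

Theorem card_le_tc2_boundn : #|P| <= tc2_boundn D d.
Proof.
have [sparse|/forall_inPn[Y Yh]] := boolP [forall Y in heavy v, #|fiber Y| + 3 <= D].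
  by apply: card_le_sparse => Y /(forall_inP sparse).
by rewrite -ltnNge => dense; apply: (card_le_dense Yh); lia.
Qed.

End PartnerCounting.

Lemma card_partition_setI (T : finType) (P : {set {set T}}) (A : {set T}) :
  partition P [set: T] -> #|A| = \sum_(B in P) #|A :&: B|.
Proof.
move=> partP; rewrite -sum1_card.
rewrite (eq_bigl (fun x => (x \in [set: T]) && (x \in A))) => [|x]; last by rewrite inE.
rewrite (set_partition_big_cond _ partP); apply: eq_bigr => B _.
by rewrite -sum1_card; apply: eq_bigl => x; rewrite !inE andbC.
Qed.

Section Degrees.

Variables (T : finType) (e : rel T).

Lemma deg_le_maxdeg v : deg e v <= maxdeg e.
Proof. exact: leq_bigmax. Qed.

Lemma mindeg_le_deg v : mindeg e <= deg e v.
Proof. by rewrite /mindeg -minEnat; exact: (@bigmin_le _ nat). Qed.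

Lemma mindeg_le_card : mindeg e <= #|T|.
Proof. by rewrite /mindeg -minEnat; exact: (@bigmin_le_id _ nat). Qed.

Lemma mindeg_attained : 0 < #|T| -> exists v, deg e v = mindeg e.
Proof.
case/card_gt0P => v0 _; rewrite /mindeg -minEnat.
have [v _ ->] := @eq_bigmin _ nat _ #|T| v0 xpredT (deg e) isT (fun v _ => max_card _).
by exists v.
Qed.

Lemma mindeg_le_maxdeg : 0 < #|T| -> mindeg e <= maxdeg e.
Proof.
by case/card_gt0P => v _; exact: leq_trans (mindeg_le_deg v) (deg_le_maxdeg v).
Qed.

Lemma regular_degs k : 0 < #|T| -> (forall v, deg e v = k) ->
  mindeg e = k /\ maxdeg e = k.
Proof.
move=> /[dup] /card_gt0P[v0 _] T0 degk; split.
  by have [v <-] := mindeg_attained T0.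
apply/eqP; rewrite eqn_leq -{2}(degk v0) deg_le_maxdeg andbT.
by apply/bigmax_leqP => v _; rewrite degk.
Qed.

End Degrees.

Section Coalitions.

Variables (T : finType) (e : rel T).

Lemma total2coalC U W : total2coal e U W = total2coal e W U.
Proof. by rewrite /total2coal disjoint_sym setUC; congr (_ && _); exact: andbCA. Qed.

Lemma total2coal_cover U W u :
  total2coal e U W -> 2 <= #|nbhd e u :&: U| + #|nbhd e u :&: W|.
Proof.
rewrite /total2coal /total2dom => /and4P[_ _ _ /forallP/(_ u)]; rewrite setIUr => domUW.
by apply: leq_trans domUW _; rewrite cardsU leq_subr.
Qed.

Lemma not_total2domP S : ~~ total2dom e S -> exists u, #|nbhd e u :&: S| <= 1.
Proof. by case/forallPn => u; rewrite -ltnNge ltnS; exists u. Qed.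

Definition coal_partner (P : {set {set T}}) S :=
  odflt S [pick W in P | total2coal e S W].

Lemma coal_partnerP P S : total2coal_partition e P -> S \in P ->
  coal_partner P S \in P /\ total2coal e S (coal_partner P S).
Proof.
case/andP => _ /forall_inP coalP /coalP /exists_inP[W WP /andP[_ coalSW]].
rewrite /coal_partner; case: pickP => [W' /andP[]|/(_ W)] //.
by rewrite WP coalSW.
Qed.

Theorem TC2_le_boundn : 0 < #|T| -> TC2 e <= tc2_boundn (maxdeg e) (mindeg e).
Proof.
move=> T0; have [v degv] := mindeg_attained e T0.
apply/bigmax_leqP => P coalP; have partP : partition P [set: T] by case/andP: coalP.
apply: (@card_le_tc2_boundn _ _ P (coal_partner P)
          (fun u S => #|nbhd e u :&: S|) _ _ _ _ _ v).
- by move=> u; rewrite -card_partition_setI // deg_le_maxdeg.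
- by move=> S /(coal_partnerP coalP) [].
- by move=> u S /(coal_partnerP coalP) [_ /total2coal_cover].
- by move=> S /(coal_partnerP coalP) [_ /and4P[_ /not_total2domP]].
- by rewrite -card_partition_setI // -degv.
- by rewrite -degv deg_le_maxdeg.
Qed.

Lemma TC2_ge2 A : A != set0 -> A != [set: T] ->
  ~~ total2dom e A -> ~~ total2dom e (~: A) -> total2dom e [set: T] -> 2 <= TC2 e.
Proof.
move=> A0 AT ndomA ndomAC domT.
have AAC : A != ~: A by apply: contraNneq A0 => AAC; rewrite -(setICr A) -AAC setIid.
have coalA : total2coal e A (~: A).
  by rewrite /total2coal ndomA ndomAC setUCr domT disjoints_subset setCK subxx.
have partA : partition [set A; ~: A] [set: T].
  rewrite -(setUCr A); apply: partitionU1 => //; last by rewrite disjoints_subset setCK.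
  rewrite /partition cover1 eqxx trivIset1 inE eq_sym.
  by apply: contra AT => /eqP AC0; rewrite -[A]setCK AC0 setC0.
have coalP : total2coal_partition e [set A; ~: A].
  rewrite /total2coal_partition partA; apply/forall_inP => U.
  rewrite !inE => /orP[]/eqP->; apply/exists_inP.
    by exists (~: A); rewrite ?inE ?eqxx ?orbT // eq_sym AAC coalA.
  by exists A; rewrite ?inE ?eqxx // AAC total2coalC coalA.
by apply: leq_trans (leq_bigmax_cond _ coalP); rewrite cards2 AAC.
Qed.

End Coalitions.

Definition K3 : rel 'I_3 := fun x y => x != y.

Lemma K3_simple_connected : simple_connected_graph K3.
Proof.
split; first by move=> x y; rewrite /K3 eq_sym.
split; first by move=> x; rewrite /K3 eqxx.
by move=> x y; case: (eqVneq x y) => [->|xy]; [exact: connect0 | exact: connect1].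
Qed.

Lemma nbhd_K3 v : nbhd K3 v = [set~ v].
Proof. by apply/setP => u; rewrite !inE /K3 eq_sym. Qed.

Lemma degs_K3 : mindeg K3 = 2 /\ maxdeg K3 = 2.
Proof.
by apply: regular_degs => [|v]; rewrite ?card_ord // /deg nbhd_K3 cardsC1 card_ord.
Qed.

Lemma TC2_K3 : TC2 K3 = 2.
Proof.
have [mindeg2 maxdeg2] := degs_K3.
apply/eqP; rewrite eqn_leq; apply/andP; split.
  by have := TC2_le_boundn K3; rewrite card_ord mindeg2 maxdeg2; apply.
apply: (@TC2_ge2 _ _ [set ord0]).
- by apply/set0Pn; exists ord0; rewrite inE.
- by apply/eqP => /setP/(_ ord_max); rewrite !inE.
- apply/forallPn; exists ord0; rewrite -ltnNge ltnS.
  by rewrite (leq_trans (subset_leq_card (subsetIr _ _))) ?cards1.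
- apply/forallPn; exists ord_max; rewrite nbhd_K3 -setCU cardsCs setCK cards2 card_ord.
  by [].
- by apply/forallP => v; rewrite setIT nbhd_K3 cardsC1 card_ord.
Qed.

Local Open Scope ring_scope.

Lemma tc2_boundE (T : finType) (e : rel T) : (mindeg e <= maxdeg e)%N ->
  tc2_bound e = (tc2_boundn (maxdeg e) (mindeg e))%:Z.
Proof. by rewrite /tc2_bound /tc2_boundn; case: (leqP (maxdeg e) 4) => ? ?; nia. Qed.

Theorem theorem3p5 :
  (forall (T : finType) (e : rel T),
      simple_connected_graph e -> (2 <= mindeg e)%N ->
      ((TC2 e)%:Z <= tc2_bound e))
  /\
  (exists (T : finType) (e : rel T),
      [/\ simple_connected_graph e, (2 <= mindeg e)%N &
          (TC2 e)%:Z = tc2_bound e]).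
Proof.
split=> [T e _ mindeg2 | ].
  have T0 : (0 < #|T|)%N by apply: leq_trans (ltnW mindeg2) (mindeg_le_card e).
  by rewrite tc2_boundE ?mindeg_le_maxdeg // lez_nat TC2_le_boundn.
have [mindeg2 maxdeg2] := degs_K3.
exists _, K3; split; first exact: K3_simple_connected; first by rewrite mindeg2.
by rewrite tc2_boundE mindeg2 maxdeg2 // TC2_K3.
Qed.
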